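(* Let $U\subset\mathbb{R}^n$ be a bounded domain with smooth boundary and let $(u_1,u_2)\in C(\overline U)^2$ be a viscosity solution of the system (S) in $U$. Then for every $x_0\in U$ and $i\in\{1,2\}$ the limit $S_i^+(x_0):=\lim_{r\to0^+}S_i^+(x_0,r)$ exists in $\mathbb{R}$.
   Context: For $\varphi\in C^2$ near $x$, set $\Delta_\infty\varphi(x)=|D\varphi(x)|^{-2}\sum_{k,l=1}^n\varphi_{x_k}\varphi_{x_l}\varphi_{x_kx_l}(x)$ when $D\varphi(x)\neq0$. Define $\Delta_\infty^+\varphi(x)=\Delta_\infty\varphi(x)$ if $D\varphi(x)\ne0$ and $\Delta_\infty^+\varphi(x)=\max\{D^2\varphi(x)v\cdot v: v\in\mathbb{S}^{n-1}\}$ if $D\varphi(x)=0$; define $\Delta_\infty^-\varphi(x)$ in the same way with $\min$ in place of $\max$. The system (S) on an open set $\Omega$ is: $-\Delta_\infty u_1+u_1-u_2=0$ and $-\Delta_\infty u_2+u_2-u_1=0$ in $\Omega$. A pair $(u_1,u_2)$ of upper semicontinuous functions on $\Omega$ is a viscosity subsolution of (S) in $\Omega$ if for each $i\in\{1,2\}$, $j=3-i$, and each $\varphi\in C^2(\Omega)$ such that $u_i-\varphi$ has a local maximum at $x_0\in\Omega$, one has $-\Delta_\infty^+\varphi(x_0)+u_i(x_0)-u_j(x_0)\le0$. A pair of lower semicontinuous functions on $\Omega$ is a viscosity supersolution if for each $i$, $j=3-i$, and each $\varphi\in C^2(\Omega)$ such that $u_i-\varphi$ has a local minimum at $x_0\in\Omega$,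 one has $-\Delta_\infty^-\varphi(x_0)+u_i(x_0)-u_j(x_0)\ge0$. A viscosity solution is a pair that is both a subsolution and a supersolution. For $x_0\in U$, $r>0$ with $\overline B(x_0,r)\subset U$: $S_i^+(x_0,r)=\frac{\max_{|y-x_0|=r}u_i(y)-u_i(x_0)}{r}$. *)

From Stdlib Require Import Reals Lra Arith.
Open Scope R_scope.

Definition idx (n : nat) := {k : nat | (k < n)%nat}.
Definition Rn (n : nat) := idx n -> R.

Definition coordN {n : nat} (f : idx n -> R) (k : nat) : R :=
  match lt_dec k n with
  | left p => f (exist _ k p)
  | right _ => 0
  end.

Fixpoint sumN (m : nat) (f : nat -> R) : R :=
  match m with
  | O => 0
  | S m' => sumN m' f + f m'
  end.

Definition sumI {n : nat} (f : idx n -> R) : R := sumN n (coordN f).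

Definition dot {n : nat} (x y : Rn n) : R := sumI (fun k => x k * y k).
Definition norm {n : nat} (x : Rn n) : R := sqrt (dot x x).
Definition dist {n : nat} (x y : Rn n) : R := norm (fun k => x k - y k).

Definition shift {n : nat} (x : Rn n) (k : idx n) (t : R) : Rn n :=
  fun j => x j + (if Nat.eq_dec (proj1_sig j) (proj1_sig k) then t else 0).

Definition ball {n : nat} (x0 : Rn n) (r : R) : Rn n -> Prop :=
  fun y => dist y x0 < r.
Definition cball {n : nat} (x0 : Rn n) (r : R) : Rn n -> Prop :=
  fun y => dist y x0 <= r.
Definition sphere {n : nat} (x0 : Rn n) (r : R) : Rn n -> Prop :=
  fun y => dist y x0 = r.

Definition is_open {n : nat} (O : Rn n -> Prop) : Prop :=
  forall x, O x -> exists r, 0 < r /\ forall y, dist y x < r -> O y.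

Definition closure {n : nat} (O : Rn n -> Prop) : Rn n -> Prop :=
  fun x => forall eps, 0 < eps -> exists y, O y /\ dist y x < eps.

Definition boundary {n : nat} (O : Rn n -> Prop) : Rn n -> Prop :=
  fun x => closure O x /\ ~ O x.

Definition is_bounded {n : nat} (O : Rn n -> Prop) : Prop :=
  exists M, forall x, O x -> norm x <= M.

Definition is_connected {n : nat} (O : Rn n -> Prop) : Prop :=
  forall A B : Rn n -> Prop, is_open A -> is_open B ->
    (forall x, O x -> A x \/ B x) ->
    (exists x, O x /\ A x) -> (exists x, O x /\ B x) ->
    exists x, O x /\ A x /\ B x.

Definition is_domain {n : nat} (O : Rn n -> Prop) : Prop :=
  is_open O /\ is_connected O /\ exists x, O x.

Definition cont_on {n : nat} (S : Rn n -> Prop) (f : Rn n -> R) : Prop :=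
  forall x, S x -> forall eps, 0 < eps -> exists d, 0 < d /\
    forall y, S y -> dist y x < d -> Rabs (f y - f x) < eps.

Definition usc_on {n : nat} (S : Rn n -> Prop) (f : Rn n -> R) : Prop :=
  forall x, S x -> forall eps, 0 < eps -> exists d, 0 < d /\
    forall y, S y -> dist y x < d -> f y < f x + eps.

Definition lsc_on {n : nat} (S : Rn n -> Prop) (f : Rn n -> R) : Prop :=
  forall x, S x -> forall eps, 0 < eps -> exists d, 0 < d /\
    forall y, S y -> dist y x < d -> f x - eps < f y.

Definition is_partial {n : nat} (S : Rn n -> Prop) (k : idx n)
  (f g : Rn n -> R) : Prop :=
  forall x, S x -> derivable_pt_lim (fun t => f (shift x k t)) 0 (g x).

Fixpoint Ck {n : nat} (m : nat) (S : Rn n -> Prop) (f : Rn n -> R) : Prop :=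
  match m with
  | O => cont_on S f
  | S m' => cont_on S f /\
      forall k : idx n, exists g, is_partial S k f g /\ Ck m' S g
  end.

Definition Cinf {n : nat} (S : Rn n -> Prop) (f : Rn n -> R) : Prop :=
  forall m, Ck m S f.

Definition smooth_boundary {n : nat} (U : Rn n -> Prop) : Prop :=
  forall x0, boundary U x0 ->
    exists r, 0 < r /\ exists rho : Rn n -> R,
      Cinf (ball x0 r) rho /\
      (exists Drho : idx n -> Rn n -> R,
         (forall k, is_partial (ball x0 r) k rho (Drho k)) /\
         (forall x, ball x0 r x -> exists k, Drho k x <> 0)) /\
      (forall x, ball x0 r x -> (U x <-> rho x < 0)).

(* phi is C^2 on Om with gradient Dphi and Hessian D2phi,
   D2phi k l = d/dx_l (d phi / dx_k) = phi_{x_k x_l} *)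
Definition C2_with {n : nat} (Om : Rn n -> Prop) (phi : Rn n -> R)
  (Dphi : idx n -> Rn n -> R) (D2phi : idx n -> idx n -> Rn n -> R) : Prop :=
  cont_on Om phi /\
  (forall k, is_partial Om k phi (Dphi k) /\ cont_on Om (Dphi k)) /\
  (forall k l, is_partial Om l (Dphi k) (D2phi k l) /\ cont_on Om (D2phi k l)).

Definition grad_sq {n : nat} (Dphi : idx n -> Rn n -> R) (x : Rn n) : R :=
  sumI (fun k => Dphi k x ^ 2).

Definition hess_quad {n : nat} (D2phi : idx n -> idx n -> Rn n -> R)
  (x v : Rn n) : R :=
  sumI (fun k => sumI (fun l => D2phi k l x * v k * v l)).

(* Delta_infinity phi(x) for nonzero gradient *)
Definition inf_lap {n : nat} (Dphi : idx n -> Rn n -> R)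
  (D2phi : idx n -> idx n -> Rn n -> R) (x : Rn n) : R :=
  / grad_sq Dphi x *
  sumI (fun k => sumI (fun l => Dphi k x * Dphi l x * D2phi k l x)).

Definition unit_vec {n : nat} (v : Rn n) : Prop := norm v = 1.

Definition is_max_on {n : nat} (f : Rn n -> R) (S : Rn n -> Prop) (m : R) : Prop :=
  (exists y, S y /\ f y = m) /\ (forall y, S y -> f y <= m).

Definition is_min_on {n : nat} (f : Rn n -> R) (S : Rn n -> Prop) (m : R) : Prop :=
  (exists y, S y /\ f y = m) /\ (forall y, S y -> m <= f y).

Definition inf_lap_plus {n : nat} (Dphi : idx n -> Rn n -> R)
  (D2phi : idx n -> idx n -> Rn n -> R) (x : Rn n) (val : R) : Prop :=
  (grad_sq Dphi x <> 0 /\ val = inf_lap Dphi D2phi x) \/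
  (grad_sq Dphi x = 0 /\ is_max_on (hess_quad D2phi x) unit_vec val).

Definition inf_lap_minus {n : nat} (Dphi : idx n -> Rn n -> R)
  (D2phi : idx n -> idx n -> Rn n -> R) (x : Rn n) (val : R) : Prop :=
  (grad_sq Dphi x <> 0 /\ val = inf_lap Dphi D2phi x) \/
  (grad_sq Dphi x = 0 /\
     is_min_on (hess_quad D2phi x) unit_vec val).

Definition local_max_at {n : nat} (Om : Rn n -> Prop) (f : Rn n -> R)
  (x0 : Rn n) : Prop :=
  exists r, 0 < r /\ forall y, Om y -> dist y x0 < r -> f y <= f x0.

Definition local_min_at {n : nat} (Om : Rn n -> Prop) (f : Rn n -> R)
  (x0 : Rn n) : Prop :=
  exists r, 0 < r /\ forall y, Om y -> dist y x0 < r -> f x0 <= f y.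

(* subsolution condition for the i-th equation: ui, uj = u_{3-i} *)
Definition sub_cond {n : nat} (Om : Rn n -> Prop) (ui uj : Rn n -> R) : Prop :=
  forall phi Dphi D2phi x0, C2_with Om phi Dphi D2phi -> Om x0 ->
    local_max_at Om (fun y => ui y - phi y) x0 ->
    forall val, inf_lap_plus Dphi D2phi x0 val ->
      - val + ui x0 - uj x0 <= 0.

Definition super_cond {n : nat} (Om : Rn n -> Prop) (ui uj : Rn n -> R) : Prop :=
  forall phi Dphi D2phi x0, C2_with Om phi Dphi D2phi -> Om x0 ->
    local_min_at Om (fun y => ui y - phi y) x0 ->
    forall val, inf_lap_minus Dphi D2phi x0 val ->
      - val + ui x0 - uj x0 >= 0.

Definition visc_subsolution {n : nat} (Om : Rn n -> Prop) (u1 u2 : Rn n -> R) : Prop :=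
  usc_on Om u1 /\ usc_on Om u2 /\ sub_cond Om u1 u2 /\ sub_cond Om u2 u1.

Definition visc_supersolution {n : nat} (Om : Rn n -> Prop) (u1 u2 : Rn n -> R) : Prop :=
  lsc_on Om u1 /\ lsc_on Om u2 /\ super_cond Om u1 u2 /\ super_cond Om u2 u1.

Definition visc_solution {n : nat} (Om : Rn n -> Prop) (u1 u2 : Rn n -> R) : Prop :=
  visc_subsolution Om u1 u2 /\ visc_supersolution Om u1 u2.

(* m = max_{|y-x0|=r} u(y), so S^+(x0,r) = (m - u(x0)) / r *)
Definition S_plus_lim_exists {n : nat} (U : Rn n -> Prop) (u : Rn n -> R)
  (x0 : Rn n) : Prop :=
  exists L : R, forall eps, 0 < eps -> exists d, 0 < d /\
    forall r m, 0 < r -> r < d -> (forall y, cball x0 r y -> U y) ->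
      is_max_on u (sphere x0 r) m ->
      Rabs ((m - u x0) / r - L) < eps.

(* Near x0 the gap u - v is bounded below by -M, so the subsolution inequality forbids
   touching u from above, at points of a small closed ball B(x0, R0), by a C^2 function
   with infinity-Laplacian below -M.  The radial functions
     max_{|y-x0|=r} u + M (r^2 - |y - x0|^2)   and   u(x0) + a |y - x0| - M |y - x0|^2
   have infinity-Laplacian -2M (the second one away from x0, where it is replaced by a
   smoothing that is irrelevant at the touching point).  Comparing u with them yields,
   for S(r) = (max_{|y-x0|=r} u - u(x0)) / r and 0 < r < R <= R0,
     - M r <= S(r)   and   S(r) <= max (S(R) + M R, 2 M R),
   and these two bounds alone force S(r) to converge as r -> 0+, namely to the infimum over
   R of the right-hand side. *)

From Stdlib Require Import Reals Lra Lia Arith Classical ClassicalEpsilon FunctionalExtensionality.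
From Coquelicot Require Import Coquelicot.
Open Scope R_scope.

Lemma sumN_ext m f g : (forall k, (k < m)%nat -> f k = g k) -> sumN m f = sumN m g.
Proof. induction m as [|m IH]; intros H; simpl; [easy|]. rewrite IH, H; auto. Qed.

Lemma sumN_plus m f g : sumN m (fun k => f k + g k) = sumN m f + sumN m g.
Proof. induction m as [|m IH]; simpl; [lra|]. rewrite IH. lra. Qed.

Lemma sumN_scal m c f : sumN m (fun k => c * f k) = c * sumN m f.
Proof. induction m as [|m IH]; simpl; [lra|]. rewrite IH. lra. Qed.

Lemma sumN_le m f g : (forall k, (k < m)%nat -> f k <= g k) -> sumN m f <= sumN m g.
Proof.
  induction m as [|m IH]; intros H; simpl; [lra|].
  assert (f m <= g m) by auto. assert (sumN m f <= sumN m g) by auto. lra.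
Qed.

Lemma sumN_const m c : sumN m (fun _ => c) = INR m * c.
Proof. induction m as [|m IH]; simpl sumN; [simpl; lra|]. rewrite IH, S_INR. lra. Qed.

Lemma sumN_single m j a :
  sumN m (fun k => if Nat.eq_dec k j then a else 0) = if lt_dec j m then a else 0.
Proof.
  induction m as [|m IH]; simpl.
  - destruct (lt_dec j 0); [lia|auto].
  - rewrite IH. destruct (Nat.eq_dec m j), (lt_dec j m), (lt_dec j (S m)); lia || lra.
Qed.

Lemma idx_eq {n} (a b : idx n) : proj1_sig a = proj1_sig b -> a = b.
Proof.
  destruct a as [a pa], b as [b pb]; simpl; intros; subst.
  f_equal. apply Peano_dec.le_unique.
Qed.

Lemma sumI_ext {n} (f g : idx n -> R) : (forall k, f k = g k) -> sumI f = sumI g.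
Proof. intros H. apply sumN_ext. intros k _. unfold coordN. now destruct (lt_dec k n). Qed.

Lemma sumI_plus {n} (f g : idx n -> R) : sumI (fun k => f k + g k) = sumI f + sumI g.
Proof.
  unfold sumI. rewrite <- sumN_plus. apply sumN_ext. intros k _.
  unfold coordN. destruct (lt_dec k n); lra.
Qed.

Lemma sumI_scal {n} c (f : idx n -> R) : sumI (fun k => c * f k) = c * sumI f.
Proof.
  unfold sumI. rewrite <- sumN_scal. apply sumN_ext. intros k _.
  unfold coordN. destruct (lt_dec k n); lra.
Qed.

Lemma sumI_le {n} (f g : idx n -> R) : (forall k, f k <= g k) -> sumI f <= sumI g.
Proof.
  intros H. apply sumN_le. intros k _. unfold coordN. destruct (lt_dec k n); auto; lra.
Qed.

Lemma sumI_const {n} c : @sumI n (fun _ => c) = INR n * c.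
Proof.
  unfold sumI. rewrite <- sumN_const. apply sumN_ext. intros k Hk.
  unfold coordN. destruct (lt_dec k n); easy.
Qed.

Lemma sumI_nonneg {n} (f : idx n -> R) : (forall k, 0 <= f k) -> 0 <= sumI f.
Proof.
  intros H. replace 0 with (@sumI n (fun _ => 0)) by (rewrite sumI_const; ring).
  now apply sumI_le.
Qed.

Lemma sumI_single {n} (f : idx n -> R) (k : idx n) :
  sumI (fun l => if Nat.eq_dec (proj1_sig l) (proj1_sig k) then f l else 0) = f k.
Proof.
  unfold sumI.
  transitivity (sumN n (fun m => if Nat.eq_dec m (proj1_sig k) then f k else 0)).
  - apply sumN_ext. intros m Hm. unfold coordN. destruct (lt_dec m n) as [p|]; [|lia]. simpl.
    destruct (Nat.eq_dec m (proj1_sig k)); auto. f_equal. now apply idx_eq.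
  - rewrite sumN_single. destruct (lt_dec (proj1_sig k) n); auto. destruct k; simpl in *; lia.
Qed.

Lemma sumI_term_le {n} (f : idx n -> R) k : (forall j, 0 <= f j) -> f k <= sumI f.
Proof.
  intros H. rewrite <- (sumI_single f k) at 1. apply sumI_le. intros j.
  destruct (Nat.eq_dec _ _); [lra|apply H].
Qed.

(** * Euclidean distance and continuity *)

Definition sqdist {n} (c x : Rn n) : R := sumI (fun k => (x k - c k) * (x k - c k)).

Definition kron {n} (k l : idx n) : R :=
  if Nat.eq_dec (proj1_sig k) (proj1_sig l) then 1 else 0.

Lemma sumI_kron {n} (f : idx n -> R) (k : idx n) : sumI (fun l => f l * kron k l) = f k.
Proof.
  rewrite <- (sumI_single f k). apply sumI_ext. intros l. unfold kron.
  destruct (Nat.eq_dec (proj1_sig k) (proj1_sig l)), (Nat.eq_dec (proj1_sig l) (proj1_sig k));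
    lia || ring.
Qed.

Lemma dist_sqdist {n} (y c : Rn n) : dist y c = sqrt (sqdist c y).
Proof. reflexivity. Qed.

Lemma sqdist_ge0 {n} (c x : Rn n) : 0 <= sqdist c x.
Proof. apply sumI_nonneg. intros. apply Rle_0_sqr. Qed.

Lemma sqdist_self {n} (c : Rn n) : sqdist c c = 0.
Proof.
  unfold sqdist. rewrite <- (Rmult_0_r (INR n)), <- sumI_const.
  apply sumI_ext. intros; ring.
Qed.

Lemma dist_self {n} (c : Rn n) : dist c c = 0.
Proof. rewrite dist_sqdist, sqdist_self. apply sqrt_0. Qed.

Lemma dist_ge0 {n} (y c : Rn n) : 0 <= dist y c.
Proof. apply sqrt_pos. Qed.

Lemma dist_sq {n} (y c : Rn n) : dist y c * dist y c = sqdist c y.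
Proof. apply sqrt_sqrt, sqdist_ge0. Qed.

Lemma sqdist_shift {n} (c x : Rn n) (k : idx n) (t : R) :
  sqdist c (shift x k t) = sqdist c x + 2 * t * (x k - c k) + t * t.
Proof.
  unfold sqdist, shift.
  transitivity (sumI (fun j => (x j - c j) * (x j - c j) +
    (if Nat.eq_dec (proj1_sig j) (proj1_sig k)
     then (fun j => 2 * t * (x j - c j) + t * t) j else 0))).
  - apply sumI_ext. intros j. destruct (Nat.eq_dec (proj1_sig j) (proj1_sig k)); ring.
  - rewrite sumI_plus, sumI_single. ring.
Qed.

Lemma coord_le_dist {n} (y x : Rn n) k : Rabs (y k - x k) <= dist y x.
Proof.
  rewrite dist_sqdist, <- sqrt_Rsqr_abs. apply sqrt_le_1_alt.
  apply (sumI_term_le (fun k => (y k - x k) * (y k - x k))). intros; apply Rle_0_sqr.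
Qed.

Lemma dist_eq0 {n} (z x : Rn n) : dist z x = 0 -> z = x.
Proof.
  intros H. apply functional_extensionality. intros k.
  generalize (coord_le_dist z x k) (Rabs_pos (z k - x k)). rewrite H. intros.
  assert (Rabs (z k - x k) = 0) as E by lra. apply Rabs_eq_0 in E. lra.
Qed.

Lemma sphere_point {n} (x0 : Rn n) (k : idx n) r : 0 <= r -> sphere x0 r (shift x0 k r).
Proof.
  intros Hr. unfold sphere. rewrite dist_sqdist, sqdist_shift, sqdist_self.
  replace (0 + 2 * r * (x0 k - x0 k) + r * r) with (r * r) by ring. now apply sqrt_square.
Qed.

Lemma cont_on_const {n} (S : Rn n -> Prop) c : cont_on S (fun _ => c).
Proof.
  intros x _ eps He. exists 1. split; [lra|]. intros.
  now rewrite Rminus_diag, Rabs_R0.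
Qed.

Lemma cont_on_coord {n} (S : Rn n -> Prop) (k : idx n) : cont_on S (fun y => y k).
Proof.
  intros x _ eps He. exists eps. split; auto. intros.
  eapply Rle_lt_trans; [apply coord_le_dist|]; auto.
Qed.

Lemma cont_on_plus {n} (S : Rn n -> Prop) f g :
  cont_on S f -> cont_on S g -> cont_on S (fun y => f y + g y).
Proof.
  intros Hf Hg x Hx eps He.
  destruct (Hf x Hx (eps/2)) as [d1 [H1 H1']]; [lra|].
  destruct (Hg x Hx (eps/2)) as [d2 [H2 H2']]; [lra|].
  exists (Rmin d1 d2). split; [now apply Rmin_glb_lt|]. intros y Hy Hd.
  assert (A := H1' y Hy (Rlt_le_trans _ _ _ Hd (Rmin_l _ _))).
  assert (B := H2' y Hy (Rlt_le_trans _ _ _ Hd (Rmin_r _ _))).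
  replace (f y + g y - (f x + g x)) with ((f y - f x) + (g y - g x)) by ring.
  eapply Rle_lt_trans; [apply Rabs_triang|]. lra.
Qed.

Lemma cont_on_comp {n} (S : Rn n -> Prop) (g : R -> R) (F : Rn n -> R) :
  cont_on S F -> (forall x, S x -> continuity_pt g (F x)) -> cont_on S (fun y => g (F y)).
Proof.
  intros HF Hg x Hx eps He. destruct (Hg x Hx eps He) as [a [Ha Ha']].
  destruct (HF x Hx a Ha) as [d [Hd Hd']]. exists d. split; auto. intros y Hy Hyd.
  destruct (Req_dec (F y) (F x)) as [E|E].
  - now rewrite E, Rminus_diag, Rabs_R0.
  - apply (Ha' (F y)). split; [split; [exact I|auto]|]. now apply Hd'.
Qed.

Lemma cont_on_minus {n} (S : Rn n -> Prop) f g :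
  cont_on S f -> cont_on S g -> cont_on S (fun y => f y - g y).
Proof.
  intros Hf Hg. apply cont_on_plus; auto.
  apply (cont_on_comp S Ropp); auto. intros. apply (continuity_pt_opp id), continuity_pt_id.
Qed.

(* Polarization: [f g = ((f + g)^2 - (f - g)^2) / 4]. *)
Lemma cont_on_mult {n} (S : Rn n -> Prop) f g :
  cont_on S f -> cont_on S g -> cont_on S (fun y => f y * g y).
Proof.
  intros Hf Hg.
  set (q := fun t : R => / 4 * (t * t)).
  replace (fun y => f y * g y) with (fun y => q (f y + g y) - q (f y - g y))
    by (apply functional_extensionality; intros; unfold q; field).
  assert (Hq : forall t, continuity_pt q t) by (intros; unfold q; reg).
  apply cont_on_minus; apply cont_on_comp; auto.
  - now apply cont_on_plus.
  - now apply cont_on_minus.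
Qed.

Lemma cont_on_sumI {n} (S : Rn n -> Prop) (F : idx n -> Rn n -> R) :
  (forall k, cont_on S (F k)) -> cont_on S (fun y => sumI (fun k => F k y)).
Proof.
  intros H. unfold sumI.
  enough (G : forall m, cont_on S (fun y => sumN m (coordN (fun k => F k y)))) by apply G.
  intros m. induction m as [|m IH]; simpl.
  - apply cont_on_const.
  - apply cont_on_plus; auto. unfold coordN. destruct (lt_dec m n); [apply H|apply cont_on_const].
Qed.

Lemma cont_on_sqdist {n} (S : Rn n -> Prop) (c : Rn n) : cont_on S (sqdist c).
Proof.
  apply (cont_on_sumI S (fun k y => (y k - c k) * (y k - c k))). intros k.
  apply cont_on_mult; apply cont_on_minus; apply cont_on_coord || apply cont_on_const.
Qed.

Lemma cont_on_dist {n} (S : Rn n -> Prop) (c : Rn n) : cont_on S (fun y => dist y c).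
Proof.
  apply (cont_on_comp S sqrt (sqdist c)).
  - apply cont_on_sqdist.
  - intros. apply continuity_pt_sqrt, sqdist_ge0.
Qed.

Lemma cont_on_subset {n} (A B : Rn n -> Prop) f :
  cont_on A f -> (forall y, B y -> A y) -> cont_on B f.
Proof. intros H Hs x Hx eps He. destruct (H x (Hs x Hx) eps He) as [d [Hd H']]. exists d; auto. Qed.

Lemma closure_of_mem {n} (U : Rn n -> Prop) y : U y -> closure U y.
Proof. intros H eps He. exists y. split; auto. now rewrite dist_self. Qed.

(** * Maxima on closed balls *)

Definition strict_incr (phi : nat -> nat) := forall j, (phi j < phi (S j))%nat.

Lemma strict_incr_ge phi : strict_incr phi -> forall j, (j <= phi j)%nat.
Proof. intros H j. induction j; [lia|]. specialize (H j). lia. Qed.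

Lemma strict_incr_comp phi psi :
  strict_incr phi -> strict_incr psi -> strict_incr (fun j => phi (psi j)).
Proof.
  intros H1 H2 j. specialize (H2 j). induction H2 as [|b _ IH]; [apply H1|].
  specialize (H1 b). lia.
Qed.

Lemma Un_cv_subseq u l phi : Un_cv u l -> strict_incr phi -> Un_cv (fun j => u (phi j)) l.
Proof.
  intros H Hp eps He. destruct (H eps He) as [N HN]. exists N. intros j Hj.
  apply HN. generalize (strict_incr_ge phi Hp j). lia.
Qed.

Lemma inv_INR_S_small eps : 0 < eps -> exists N, forall j, (N <= j)%nat -> / (INR j + 1) < eps.
Proof.
  intros He. destruct (archimed_cor1 eps He) as [N [H1 H2]]. exists N. intros j Hj.
  apply Rle_lt_trans with (/ INR N); auto. apply Rinv_le_contravar; [now apply lt_0_INR|].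
  apply le_INR in Hj. lra.
Qed.

Lemma ValAdh_subseq u l : ValAdh u l -> exists psi, strict_incr psi /\ Un_cv (fun j => u (psi j)) l.
Proof.
  intros H.
  assert (Hp : forall N j, exists p, (N <= p)%nat /\ Rabs (u p - l) < / (INR j + 1)).
  { intros N j. assert (Hpos : 0 < / (INR j + 1)).
    { apply Rinv_0_lt_compat. generalize (pos_INR j); lra. }
    destruct (H (disc l (mkposreal _ Hpos)) N) as [p Hp].
    - exists (mkposreal _ Hpos). intros y Hy; auto.
    - now exists p. }
  destruct (choice (fun (Nj : nat * nat) p => (fst Nj <= p)%nat /\ Rabs (u p - l) < / (INR (snd Nj) + 1)))
    as [pick Hpick]; [intros []; apply Hp|].
  set (psi := fix psi (j : nat) : nat :=
                match j with O => pick (O, O) | S j' => pick (S (psi j'), S j') end).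
  exists psi. split.
  - intros j. simpl. destruct (Hpick (S (psi j), S j)). simpl in *. lia.
  - intros eps He. destruct (inv_INR_S_small eps He) as [N HN]. exists N. intros j Hj.
    unfold R_dist. apply Rlt_trans with (/ (INR j + 1)); auto.
    destruct j; apply Hpick.
Qed.

(* Bolzano-Weierstrass in [Rn n], one coordinate at a time. *)
Lemma bounded_seq_cv_subseq {n} (xs : nat -> Rn n) (c : Rn n) (rad : R) :
  (forall j k, Rabs (xs j k - c k) <= rad) ->
  exists phi, strict_incr phi /\
    exists lim : Rn n, forall k, Un_cv (fun j => xs (phi j) k) (lim k).
Proof.
  intros Hb.
  enough (G : forall m, exists phi, strict_incr phi /\ exists lim : Rn n,
    forall k, (proj1_sig k < m)%nat -> Un_cv (fun j => xs (phi j) k) (lim k)).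
  { destruct (G n) as [phi [Hphi [lim Hlim]]]. exists phi. split; auto. exists lim.
    intros k. apply Hlim. now destruct k. }
  intros m. induction m as [|m [phi [Hphi [lim Hlim]]]].
  - exists (fun j => j). split; [intros j; lia|]. exists c. intros k Hk; lia.
  - destruct (lt_dec m n) as [Hm|Hm].
    + set (km := exist (fun k => (k < n)%nat) m Hm : idx n).
      destruct (Bolzano_Weierstrass (fun j => xs (phi j) km)
                  (fun y => c km - rad <= y <= c km + rad)) as [l Hl].
      { apply compact_P3. }
      { intros j. specialize (Hb (phi j) km). apply Rabs_le_between in Hb. lra. }
      destruct (ValAdh_subseq _ _ Hl) as [psi [Hpsi Hcv]].
      exists (fun j => phi (psi j)). split; [now apply strict_incr_comp|].
      exists (fun k => if Nat.eq_dec (proj1_sig k) m then l else lim k). intros k Hk.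
      destruct (Nat.eq_dec (proj1_sig k) m).
      * replace k with km by now apply idx_eq. exact Hcv.
      * apply (Un_cv_subseq (fun j => xs (phi j) k)); auto. apply Hlim. lia.
    + exists phi. split; auto. exists lim. intros k Hk. apply Hlim. destruct k; simpl in *; lia.
Qed.

Lemma Un_cv_coord_dist {n} (y : nat -> Rn n) (l : Rn n) :
  (forall k, Un_cv (fun j => y j k) (l k)) ->
  forall eps, 0 < eps -> exists N, forall j, (N <= j)%nat -> dist (y j) l < eps.
Proof.
  intros H eps He. set (e := eps / (INR n + 1)).
  assert (Hn : 0 <= INR n) by apply pos_INR.
  assert (He' : 0 < e) by (apply Rdiv_lt_0_compat; lra).
  assert (Hunif : forall m, exists N, forall j, (N <= j)%nat ->
            forall k, (proj1_sig k < m)%nat -> Rabs (y j k - l k) < e).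
  { intros m. induction m as [|m [N HN]].
    - exists O. intros; lia.
    - destruct (lt_dec m n) as [Hm|Hm].
      + set (km := exist (fun k => (k < n)%nat) m Hm : idx n).
        destruct (H km e He') as [N2 HN2]. exists (max N N2). intros j Hj k Hk.
        destruct (Nat.eq_dec (proj1_sig k) m).
        * replace k with km by now apply idx_eq. apply HN2. lia.
        * apply HN; lia.
      + exists N. intros j Hj k Hk. apply HN; auto. destruct k; simpl in *; lia. }
  destruct (Hunif n) as [N HN]. exists N. intros j Hj.
  rewrite dist_sqdist, <- (sqrt_square eps) by lra. apply sqrt_lt_1_alt.
  split; [apply sqdist_ge0|].
  apply Rle_lt_trans with (@sumI n (fun _ => e * e)).
  - apply sumI_le. intros k. assert (A := HN j Hj k (proj2_sig k)).
    apply Rabs_def2 in A. nra.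
  - rewrite sumI_const.
    assert (Eeps : eps = e * (INR n + 1)) by (unfold e; field; lra).
    rewrite Eeps. assert (0 < e * e) by nra. nra.
Qed.

Lemma cball_center {n} (x0 : Rn n) r : 0 <= r -> cball x0 r x0.
Proof. intros. unfold cball. now rewrite dist_self. Qed.

Lemma cball_argmax_of_bounded {n} (x0 : Rn n) (rad : R) (F : Rn n -> R) :
  0 <= rad -> cont_on (cball x0 rad) F -> (exists B, forall y, cball x0 rad y -> F y <= B) ->
  exists z, cball x0 rad z /\ forall y, cball x0 rad y -> F y <= F z.
Proof.
  intros Hrad HF [B HB].
  set (E := fun s => exists y, cball x0 rad y /\ s = F y).
  destruct (completeness E) as [s [Hs_ub Hs_lub]].
  { exists B. intros x [y [Hy ->]]. auto. }
  { exists (F x0), x0. split; auto. now apply cball_center. }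
  assert (Happrox : forall j, exists y, cball x0 rad y /\ s - / (INR j + 1) < F y).
  { intros j. apply NNPP. intros Hno.
    assert (s <= s - / (INR j + 1)).
    { apply Hs_lub. intros x [y [Hy ->]]. apply Rnot_lt_le. intros Hlt. apply Hno. now exists y. }
    assert (0 < / (INR j + 1)) by (apply Rinv_0_lt_compat; generalize (pos_INR j); lra). lra. }
  destruct (choice _ Happrox) as [xs Hxs].
  destruct (bounded_seq_cv_subseq xs x0 rad) as [phi [Hphi [z Hz]]].
  { intros j k. eapply Rle_trans; [apply coord_le_dist|apply Hxs]. }
  assert (Hcv := Un_cv_coord_dist (fun j => xs (phi j)) z Hz).
  assert (Hzc : cball x0 rad z).
  { unfold cball. apply Rnot_lt_le. intros Hlt.
    destruct (cont_on_dist (fun _ => True) x0 z I (dist z x0 - rad)) as [d [Hd0 Hd1]]; [lra|].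
    destruct (Hcv d Hd0) as [N HN]. specialize (Hd1 _ I (HN N (le_n _))).
    destruct (Hxs (phi N)) as [Hc _]. unfold cball in Hc. apply Rabs_def2 in Hd1. lra. }
  exists z. split; auto.
  assert (Hsz : s <= F z).
  { apply Rnot_lt_le. intros Hlt.
    destruct (HF z Hzc ((s - F z) / 2)) as [d [Hd0 Hd1]]; [lra|].
    destruct (Hcv d Hd0) as [N1 HN1].
    destruct (inv_INR_S_small ((s - F z) / 2)) as [N2 HN2]; [lra|].
    set (j := max N1 N2).
    assert (A := HN2 (phi j) ltac:(generalize (strict_incr_ge phi Hphi j); unfold j; lia)).
    destruct (Hxs (phi j)) as [Hc Hv].
    specialize (Hd1 _ Hc (HN1 j ltac:(unfold j; lia))). apply Rabs_def2 in Hd1. lra. }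
  intros y Hy. apply Rle_trans with s; auto. apply Hs_ub. now exists y.
Qed.

(* [atan] makes [F] bounded without moving its maximum points. *)
Lemma cball_argmax {n} (x0 : Rn n) (rad : R) (F : Rn n -> R) :
  0 <= rad -> cont_on (cball x0 rad) F ->
  exists z, cball x0 rad z /\ forall y, cball x0 rad y -> F y <= F z.
Proof.
  intros Hrad HF.
  destruct (cball_argmax_of_bounded x0 rad (fun y => atan (F y))) as [z [Hz Hmax]]; auto.
  - apply cont_on_comp; auto. intros y _. apply derivable_continuous_pt, derivable_pt_atan.
  - exists (PI / 2). intros y _. apply Rlt_le, atan_bound.
  - exists z. split; auto. intros y Hy. apply Rnot_lt_le. intros Hlt.
    apply atan_increasing in Hlt. specialize (Hmax y Hy). lra.
Qed.

(** * Radial test functions *)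

Lemma derivable_pt_lim_ext f g x l :
  (forall t, f t = g t) -> derivable_pt_lim g x l -> derivable_pt_lim f x l.
Proof. intros H. now replace f with g by (apply functional_extensionality; auto). Qed.

Lemma continuity_pt_of_derivable h h1 :
  (forall t, derivable_pt_lim h t (h1 t)) -> forall t, continuity_pt h t.
Proof. intros H t. apply derivable_continuous_pt. exists (h1 t). apply H. Qed.

Lemma derivable_pt_lim_value f x l l' :
  derivable_pt_lim f x l -> l = l' -> derivable_pt_lim f x l'.
Proof. now intros H <-. Qed.

Section RadialTestFunction.
Context {n : nat} (c : Rn n) (h h1 h2 : R -> R).

Definition radial (x : Rn n) := h (sqdist c x).
Definition radial_grad (k : idx n) (x : Rn n) := 2 * h1 (sqdist c x) * (x k - c k).
Definition radial_hess (k l : idx n) (x : Rn n) :=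
  4 * h2 (sqdist c x) * (x k - c k) * (x l - c l) + 2 * h1 (sqdist c x) * kron k l.

Lemma derivable_pt_lim_along_sqdist (g g1 : R -> R) x k :
  (forall t, derivable_pt_lim g t (g1 t)) ->
  derivable_pt_lim (fun t => g (sqdist c (shift x k t))) 0 (2 * g1 (sqdist c x) * (x k - c k)).
Proof.
  intros Hg.
  apply derivable_pt_lim_ext with (fun t => g (sqdist c x + 2 * (x k - c k) * t + t * t)).
  { intros t. rewrite sqdist_shift. f_equal. ring. }
  replace (2 * g1 (sqdist c x) * (x k - c k))
    with (g1 (sqdist c x + 2 * (x k - c k) * 0 + 0 * 0) * (2 * (x k - c k))).
  2:{ replace (sqdist c x + _ + _) with (sqdist c x) by ring. ring. }
  apply derivable_pt_lim_comp; [|apply Hg].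
  apply is_derive_Reals. auto_derive; auto. ring.
Qed.

Lemma radial_C2 (Om : Rn n -> Prop) :
  (forall t, derivable_pt_lim h t (h1 t)) -> (forall t, derivable_pt_lim h1 t (h2 t)) ->
  (forall t, continuity_pt h2 t) ->
  C2_with Om radial radial_grad radial_hess.
Proof.
  intros Hh Hh1 Hh2.
  assert (Ch : forall t, continuity_pt h t) by exact (continuity_pt_of_derivable _ _ Hh).
  assert (Ch1 : forall t, continuity_pt h1 t) by exact (continuity_pt_of_derivable _ _ Hh1).
  assert (Cdiff : forall k, cont_on Om (fun x : Rn n => x k - c k))
    by (intros; apply cont_on_minus; [apply cont_on_coord|apply cont_on_const]).
  assert (Cradial : forall g, (forall t, continuity_pt g t) -> cont_on Om (fun x => g (sqdist c x)))
    by (intros; apply cont_on_comp; auto; apply cont_on_sqdist).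
  split; [|split].
  - now apply Cradial.
  - intros k. split.
    + intros x _. now apply derivable_pt_lim_along_sqdist.
    + unfold radial_grad. repeat apply cont_on_mult; auto using cont_on_const.
  - intros k l. split.
    + intros x _. unfold radial_grad.
      apply derivable_pt_lim_ext
        with (fun t => 2 * h1 (sqdist c (shift x l t)) * (x k - c k + kron k l * t)).
      { intros t. unfold shift, kron. destruct (Nat.eq_dec _ _); ring. }
      eapply derivable_pt_lim_value.
      { apply derivable_pt_lim_mult.
        - apply derivable_pt_lim_scal. now apply derivable_pt_lim_along_sqdist.
        - apply is_derive_Reals. auto_derive; auto. }
      unfold radial_hess. rewrite Rmult_0_r, Rplus_0_r.
      replace (shift x l 0) with x
        by (apply functional_extensionality; intros j; unfold shift; destruct (Nat.eq_dec _ _); ring).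
      ring.
    + unfold radial_hess.
      apply cont_on_plus; repeat apply cont_on_mult; auto using cont_on_const.
Qed.

Lemma radial_grad_sq x :
  grad_sq radial_grad x = 4 * (h1 (sqdist c x) * h1 (sqdist c x)) * sqdist c x.
Proof.
  unfold grad_sq. set (q := sqdist c x). unfold q at 3, sqdist.
  rewrite <- sumI_scal. apply sumI_ext. intros; unfold radial_grad; fold q; simpl; ring.
Qed.

Lemma radial_inf_lap x : grad_sq radial_grad x <> 0 ->
  inf_lap radial_grad radial_hess x = 4 * h2 (sqdist c x) * sqdist c x + 2 * h1 (sqdist c x).
Proof.
  intros Hg. pose proof Hg as Hg'. rewrite radial_grad_sq in Hg'.
  set (q := sqdist c x) in *. set (a := h1 q) in *. set (b := h2 q).
  assert (Hsum : sumI (fun k => sumI (fun l =>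
                   radial_grad k x * radial_grad l x * radial_hess k l x))
                 = (16 * (a * a) * b * q + 8 * (a * a * a)) * q).
  { unfold q at 2, sqdist. rewrite <- sumI_scal. apply sumI_ext. intros k.
    unfold radial_grad, radial_hess. fold q a b.
    transitivity (sumI (fun l => 16 * (a * a) * b * ((x k - c k) * (x k - c k)) *
                                   ((x l - c l) * (x l - c l)) +
                                 8 * (a * a * a) * (x k - c k) * ((x l - c l) * kron k l))).
    - apply sumI_ext. intros l. ring.
    - rewrite sumI_plus, !sumI_scal, (sumI_kron (fun l => x l - c l)). fold (sqdist c x) q. ring. }
  unfold inf_lap. rewrite Hsum, radial_grad_sq. fold q a. field.
  split; intros E; apply Hg'; rewrite E; ring.
Qed.

Lemma radial_hess_quad x v : hess_quad radial_hess x v =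
  4 * h2 (sqdist c x) * (sumI (fun k => (x k - c k) * v k) * sumI (fun k => (x k - c k) * v k))
  + 2 * h1 (sqdist c x) * sumI (fun k => v k * v k).
Proof.
  unfold hess_quad. set (S := sumI (fun k => (x k - c k) * v k)).
  transitivity (sumI (fun k => (4 * h2 (sqdist c x) * S) * ((x k - c k) * v k)
                               + (2 * h1 (sqdist c x)) * (v k * v k))).
  - apply sumI_ext. intros k. unfold radial_hess.
    transitivity (sumI (fun l => (4 * h2 (sqdist c x) * (x k - c k) * v k) * ((x l - c l) * v l)
                                 + (2 * h1 (sqdist c x) * v k) * (v l * kron k l))).
    + apply sumI_ext. intros l. ring.
    + rewrite sumI_plus, !sumI_scal, (sumI_kron v). fold S. ring.
  - rewrite sumI_plus, !sumI_scal. fold S. ring.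
Qed.

End RadialTestFunction.

(** * A C^2 smoothing of the square root *)

Lemma derivable_pt_lim_locally_eq f g x l :
  (exists d, 0 < d /\ forall s, Rabs (s - x) < d -> f s = g s) ->
  derivable_pt_lim g x l -> derivable_pt_lim f x l.
Proof.
  intros [d [Hd Hfg]] H eps He. destruct (H eps He) as [del Hdel].
  assert (Hm : 0 < Rmin d del) by (apply Rmin_pos; auto; apply cond_pos).
  exists (mkposreal _ Hm). intros s Hs Hsd. simpl in Hsd.
  rewrite !Hfg.
  - apply Hdel; auto. eapply Rlt_le_trans; [apply Hsd|apply Rmin_r].
  - now rewrite Rminus_diag, Rabs_R0.
  - replace (x + s - x) with s by ring. eapply Rlt_le_trans; [apply Hsd|apply Rmin_l].
Qed.

Definition glue (t1 : R) (g p : R -> R) (t : R) : R := if Rle_dec t1 t then g t else p t.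

Lemma glue_right t1 g p t : t1 <= t -> glue t1 g p t = g t.
Proof. unfold glue. now destruct (Rle_dec t1 t). Qed.

Lemma glue_locally t1 g p t :
  t <> t1 -> exists d, 0 < d /\ forall s, Rabs (s - t) < d ->
    glue t1 g p s = if Rle_dec t1 t then g s else p s.
Proof.
  intros Ht. exists (Rabs (t - t1)). split; [now apply Rabs_pos_lt, Rminus_eq_contra|].
  intros s Hs. unfold glue. apply Rabs_def2 in Hs.
  destruct (Rle_dec t1 s), (Rle_dec t1 t); auto;
    exfalso; unfold Rabs in Hs; destruct (Rcase_abs (t - t1)); lra.
Qed.

Lemma derivable_pt_lim_glue (g p g' p' : R -> R) t1 :
  (forall t, t1 <= t -> derivable_pt_lim g t (g' t)) ->
  (forall t, t <= t1 -> derivable_pt_lim p t (p' t)) ->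
  g t1 = p t1 -> g' t1 = p' t1 ->
  forall t, derivable_pt_lim (glue t1 g p) t (glue t1 g' p' t).
Proof.
  intros Hg Hp E E' t.
  destruct (Req_dec t t1) as [->|Ht].
  - rewrite glue_right by lra. intros eps He.
    destruct (Hg t1 (Rle_refl _) eps He) as [d1 H1].
    destruct (Hp t1 (Rle_refl _) eps He) as [d2 H2].
    assert (Hm : 0 < Rmin d1 d2) by (apply Rmin_pos; apply cond_pos).
    exists (mkposreal _ Hm). intros s Hs Hsd. simpl in Hsd.
    rewrite (glue_right t1 g p t1) by lra. unfold glue.
    destruct (Rle_dec t1 (t1 + s)).
    + apply H1; auto. eapply Rlt_le_trans; [apply Hsd|apply Rmin_l].
    + rewrite E, E'. apply H2; auto. eapply Rlt_le_trans; [apply Hsd|apply Rmin_r].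
  - eapply derivable_pt_lim_locally_eq; [now apply glue_locally|].
    unfold glue. destruct (Rle_dec t1 t); [apply Hg|apply Hp]; lra.
Qed.

Lemma continuity_pt_glue (g p : R -> R) t1 :
  (forall t, t1 <= t -> continuity_pt g t) -> (forall t, t <= t1 -> continuity_pt p t) ->
  g t1 = p t1 -> forall t, continuity_pt (glue t1 g p) t.
Proof.
  intros Hg Hp E t eps He.
  destruct (Req_dec t t1) as [->|Ht].
  - destruct (Hp t1 (Rle_refl _) eps He) as [a1 [Ha1 Ha1']].
    destruct (Hg t1 (Rle_refl _) eps He) as [a2 [Ha2 Ha2']].
    exists (Rmin a1 a2). split; [now apply Rmin_pos|]. intros s [Hs Hsd].
    rewrite (glue_right t1 g p t1) by lra. unfold glue. destruct (Rle_dec t1 s).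
    + apply Ha2'. split; auto. eapply Rlt_le_trans; [apply Hsd|apply Rmin_r].
    + rewrite E. apply Ha1'. split; auto. eapply Rlt_le_trans; [apply Hsd|apply Rmin_l].
  - destruct (glue_locally t1 g p t Ht) as [d [Hd Hloc]].
    assert (Hc : continuity_pt (if Rle_dec t1 t then g else p) t)
      by (destruct (Rle_dec t1 t); [apply Hg|apply Hp]; lra).
    destruct (Hc eps He) as [a [Ha Ha']].
    exists (Rmin a d). split; [now apply Rmin_pos|]. intros s [Hs Hsd].
    simpl in Hsd |- *. unfold R_dist in Hsd |- *.
    rewrite Hloc by (eapply Rlt_le_trans; [apply Hsd|apply Rmin_r]).
    replace (glue t1 g p t) with ((if Rle_dec t1 t then g else p) t)
      by (unfold glue; now destruct (Rle_dec t1 t)).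
    replace (if Rle_dec t1 t then g s else p s) with ((if Rle_dec t1 t then g else p) s)
      by now destruct (Rle_dec t1 t).
    apply Ha'. split; auto. eapply Rlt_le_trans; [apply Hsd|apply Rmin_l].
Qed.

Section SmoothedSqrt.
Variable t1 : R.
Hypothesis t1_pos : 0 < t1.

(* [sqrt] continued below [t1] by its second-order Taylor polynomial at [t1]: the
   pieces agree to second order at [t1], so the result is C^2 on all of R. *)
Definition smooth_sqrt :=
  glue t1 sqrt (fun t => sqrt t1 + (t - t1) / (2 * sqrt t1) - (t - t1) ^ 2 / (8 * sqrt t1 ^ 3)).
Definition smooth_sqrt1 :=
  glue t1 (fun t => / (2 * sqrt t)) (fun t => / (2 * sqrt t1) - (t - t1) / (4 * sqrt t1 ^ 3)).
Definition smooth_sqrt2 :=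
  glue t1 (fun t => - / (4 * sqrt t ^ 3)) (fun _ => - / (4 * sqrt t1 ^ 3)).

Let sqrt_pos_above t : t1 <= t -> 0 < sqrt t.
Proof. intros. apply sqrt_lt_R0. lra. Qed.

Lemma smooth_sqrt_deriv t : derivable_pt_lim smooth_sqrt t (smooth_sqrt1 t).
Proof.
  assert (H1 := sqrt_pos_above t1 (Rle_refl _)).
  apply derivable_pt_lim_glue.
  - intros; apply derivable_pt_lim_sqrt; lra.
  - intros. apply is_derive_Reals. auto_derive; auto. field. lra.
  - field. lra.
  - field. lra.
Qed.

Lemma smooth_sqrt1_deriv t : derivable_pt_lim smooth_sqrt1 t (smooth_sqrt2 t).
Proof.
  assert (H1 := sqrt_pos_above t1 (Rle_refl _)).
  apply derivable_pt_lim_glue.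
  - intros s Hs. assert (H2 := sqrt_pos_above s Hs).
    apply is_derive_Reals. auto_derive; [repeat split; lra|]. field. lra.
  - intros. apply is_derive_Reals. auto_derive; auto. field. lra.
  - field. lra.
  - reflexivity.
Qed.

Lemma smooth_sqrt2_cont t : continuity_pt smooth_sqrt2 t.
Proof.
  apply continuity_pt_glue.
  - intros s Hs. assert (H2 := sqrt_pos_above s Hs).
    apply continuity_pt_filterlim. change (continuous (fun t => - / (4 * sqrt t ^ 3)) s).
    apply (ex_derive_continuous (V := R_CompleteNormedModule)).
    auto_derive. repeat split; try lra. apply Rgt_not_eq. repeat apply Rmult_lt_0_compat; lra.
  - intros. apply continuity_pt_const. intros a b; auto.
  - reflexivity.
Qed.

End SmoothedSqrt.

(** * Convergence from the cone bounds *)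

(* [L] is the infimum over [0 < R < R0] of the upper bounds [Rmax (s_R + M R) (2 M R)]. *)
Lemma limit_of_cone_bounds (M R0 : R) (S : R -> R -> Prop) :
  0 < M -> 0 < R0 ->
  (forall r, 0 < r <= R0 -> exists s, S r s) ->
  (forall r s, 0 < r <= R0 -> S r s -> - M * r <= s) ->
  (forall r s R s', 0 < r < R -> R <= R0 -> S r s -> S R s' ->
     s <= Rmax (s' + M * R) (2 * M * R)) ->
  exists L, forall eps, 0 < eps -> exists d, 0 < d <= R0 /\
    forall r s, 0 < r < d -> S r s -> Rabs (s - L) < eps.
Proof.
  intros HM HR0 Hex Hlow Hup.
  set (bound := fun R s => Rmax (s + M * R) (2 * M * R)).
  set (E := fun x => exists R s, 0 < R < R0 /\ S R s /\ x = - bound R s).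
  destruct (completeness E) as [lam [Hlam_ub Hlam_lub]].
  { exists 0. intros x (R & s & HR & _ & ->). unfold bound.
    generalize (Rmax_r (s + M * R) (2 * M * R)). nra. }
  { destruct (Hex (R0 / 2)) as [s Hs]; [lra|]. exists (- bound (R0 / 2) s), (R0 / 2), s.
    repeat split; auto; lra. }
  set (L := - lam). exists L.
  assert (L_le : forall R s, 0 < R < R0 -> S R s -> L <= bound R s).
  { intros R s HR Hs. assert (- bound R s <= lam) by (apply Hlam_ub; now exists R, s).
    unfold L; lra. }
  assert (L_approx : forall e, 0 < e -> exists R s, 0 < R < R0 /\ S R s /\ bound R s < L + e).
  { intros e He. apply NNPP. intros Hno.
    assert (lam <= lam - e); [|lra].
    apply Hlam_lub. intros x (R & s & HR & Hs & ->). apply Rnot_lt_le. intros Hlt.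
    apply Hno. exists R, s. unfold L. repeat split; auto; lra. }
  intros eps He. destruct (L_approx eps He) as (R1 & s1 & HR1 & Hs1 & Hb1).
  exists (Rmin R1 (eps / (3 * M))).
  assert (Heps : 0 < eps / (3 * M)) by (apply Rdiv_lt_0_compat; lra).
  split; [split; [now apply Rmin_pos|generalize (Rmin_l R1 (eps / (3 * M))); lra]|].
  intros r s [Hr Hrd] Hs.
  assert (Hr1 : r < R1) by (eapply Rlt_le_trans; [apply Hrd|apply Rmin_l]).
  assert (HrM : 3 * M * r < eps).
  { assert (Hr' : r < eps / (3 * M)) by (eapply Rlt_le_trans; [apply Hrd|apply Rmin_r]).
    apply (Rmult_lt_compat_l (3 * M)) in Hr'; [|lra].
    replace (3 * M * (eps / (3 * M))) with eps in Hr' by (field; lra). lra. }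
  assert (Hupper : s <= bound R1 s1) by (apply (Hup r s R1 s1); auto; lra).
  assert (Hlower : - M * r <= s) by (apply Hlow; auto; lra).
  assert (HLr : L <= bound r s) by (apply L_le; auto; lra).
  unfold bound in HLr. apply Rabs_def1.
  - lra.
  - destruct (Rle_dec (s + M * r) (2 * M * r)).
    + rewrite Rmax_right in HLr by lra. nra.
    + rewrite Rmax_left in HLr by lra. nra.
Qed.

(** * Paraboloids and cones as test functions *)

Lemma unit_vec_exists {n} : (0 < n)%nat -> exists e : Rn n, unit_vec e.
Proof.
  intros Hn. set (k0 := exist (fun k => (k < n)%nat) 0%nat Hn : idx n).
  exists (shift (fun _ => 0) k0 1).
  assert (H := sphere_point (fun _ => 0) k0 1 Rle_0_1). unfold sphere, dist in H.
  unfold unit_vec. rewrite <- H at 2. unfold norm, dot. f_equal. apply sumI_ext. intros; ring.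
Qed.

Lemma unit_vec_sq {n} (w : Rn n) : unit_vec w -> sumI (fun k => w k * w k) = 1.
Proof.
  unfold unit_vec, norm, dot. intros H.
  rewrite <- (sqrt_sqrt (sumI (fun k => w k * w k))), H; [ring|].
  apply sumI_nonneg. intros; apply Rle_0_sqr.
Qed.

Section Paraboloid.
Context {n : nat} (c : Rn n) (A b : R).

Let p t := A - b * t.
Let p1 (_ : R) := - b.
Let p2 (_ : R) := 0.

Lemma paraboloid_C2 (Om : Rn n -> Prop) :
  C2_with Om (radial c p) (radial_grad c p1) (radial_hess c p1 p2).
Proof.
  apply radial_C2; intros t; unfold p, p1, p2.
  - apply is_derive_Reals. auto_derive; auto. ring.
  - apply derivable_pt_lim_const.
  - apply continuity_pt_const. now intros ? ?.
Qed.

Lemma paraboloid_inf_lap_plus z : (0 < n)%nat ->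
  inf_lap_plus (radial_grad c p1) (radial_hess c p1 p2) z (- 2 * b).
Proof.
  intros Hn. destruct (Req_dec (grad_sq (radial_grad c p1) z) 0) as [E|E].
  - right. split; auto. split.
    + destruct (unit_vec_exists Hn) as [e He]. exists e. split; auto.
      rewrite radial_hess_quad, (unit_vec_sq e He). unfold p1, p2. ring.
    + intros w Hw. rewrite radial_hess_quad, (unit_vec_sq w Hw). unfold p1, p2. lra.
  - left. split; auto. rewrite radial_inf_lap; auto. unfold p1, p2. ring.
Qed.

End Paraboloid.

Lemma derivable_pt_lim_affine (f : R -> R) t l A a b :
  derivable_pt_lim f t l -> derivable_pt_lim (fun s => A + a * f s - b * s) t (a * l - b).
Proof.
  intros H. eapply derivable_pt_lim_value.
  - apply (derivable_pt_lim_minus (fun s => A + a * f s) (fun s => b * s)).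
    + apply (derivable_pt_lim_plus (fun _ => A) (fun s => a * f s)).
      * apply derivable_pt_lim_const.
      * apply (derivable_pt_lim_scal f). exact H.
    + apply (derivable_pt_lim_scal id), derivable_pt_lim_id.
  - ring.
Qed.

Section SmoothedCone.
Context {n : nat} (c : Rn n) (t1 A a b : R).
Hypothesis t1_pos : 0 < t1.

Let k t := A + a * smooth_sqrt t1 t - b * t.
Let k1 t := a * smooth_sqrt1 t1 t - b.
Let k2 t := a * smooth_sqrt2 t1 t.

Lemma smoothed_cone_C2 (Om : Rn n -> Prop) :
  C2_with Om (radial c k) (radial_grad c k1) (radial_hess c k1 k2).
Proof.
  apply radial_C2; intros t; unfold k, k1, k2.
  - now apply derivable_pt_lim_affine, smooth_sqrt_deriv.
  - apply derivable_pt_lim_ext with (fun s => - b + a * smooth_sqrt1 t1 s - 0 * s);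
      [intros; ring|].
    eapply derivable_pt_lim_value; [now apply derivable_pt_lim_affine, smooth_sqrt1_deriv|ring].
  - apply (continuity_pt_scal (smooth_sqrt2 t1)), smooth_sqrt2_cont, t1_pos.
Qed.

Lemma smoothed_cone_eq y :
  t1 <= sqdist c y -> radial c k y = A + a * dist y c - b * (dist y c * dist y c).
Proof.
  intros Hy. unfold radial, k, smooth_sqrt. rewrite glue_right by auto.
  now rewrite dist_sq, dist_sqdist.
Qed.

Lemma smoothed_cone_inf_lap_plus z :
  t1 <= sqdist c z -> 2 * b * dist z c < a ->
  inf_lap_plus (radial_grad c k1) (radial_hess c k1 k2) z (- 2 * b).
Proof.
  intros Hz Ha. set (dz := dist z c) in *.
  assert (Hq : sqdist c z = dz * dz) by apply eq_sym, dist_sq.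
  assert (Hdz : 0 < dz) by (assert (0 <= dz) by apply dist_ge0; nra).
  assert (Hs : sqrt (sqdist c z) = dz) by reflexivity.
  assert (Hk1 : k1 (sqdist c z) = a / (2 * dz) - b).
  { unfold k1, smooth_sqrt1. rewrite glue_right, Hs by auto. field. lra. }
  assert (Hk1_pos : 0 < k1 (sqdist c z)).
  { rewrite Hk1. apply Rlt_0_minus, (Rmult_lt_reg_r (2 * dz)); [lra|].
    unfold Rdiv. rewrite Rmult_assoc, Rinv_l by lra. nra. }
  assert (Hgrad : grad_sq (radial_grad c k1) z <> 0).
  { rewrite radial_grad_sq. apply Rgt_not_eq. assert (0 < sqdist c z) by nra.
    repeat apply Rmult_lt_0_compat; lra. }
  left. split; auto.
  rewrite radial_inf_lap, Hk1 by auto.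
  unfold k2, smooth_sqrt2. rewrite glue_right, Hs, Hq by auto. field. lra.
Qed.

End SmoothedCone.

(** * Comparison for subsolutions *)

(* [s] is S^+(x0, r), with the maximum over the sphere replaced by the supremum. *)
Definition sphere_slope {n} (u : Rn n -> R) (x0 : Rn n) (r s : R) : Prop :=
  is_lub (fun m => exists y, sphere x0 r y /\ m = u y) (u x0 + s * r).

Section SubsolutionNearCenter.
Context {n : nat} (U : Rn n -> Prop) (u v : Rn n -> R) (x0 : Rn n) (R0 M : R).
Hypothesis cball_in_U : forall y, cball x0 R0 y -> U y.
Hypothesis u_cont : cont_on (cball x0 R0) u.
Hypothesis u_sub : sub_cond U u v.
Hypothesis M_pos : 0 < M.
Hypothesis gap_bound : forall y, cball x0 R0 y -> - M <= u y - v y.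

Lemma inf_lap_plus_ge_at_touching phi Dphi D2phi z val :
  C2_with U phi Dphi D2phi -> cball x0 R0 z ->
  local_max_at U (fun y => u y - phi y) z -> inf_lap_plus Dphi D2phi z val -> - M <= val.
Proof.
  intros HC Hz Hmax Hval.
  specialize (u_sub phi Dphi D2phi z HC (cball_in_U z Hz) Hmax val Hval).
  specialize (gap_bound z Hz). lra.
Qed.

Lemma interior_local_max phi r y0 :
  r <= R0 -> cont_on (cball x0 r) phi -> cball x0 r y0 ->
  (forall y, sphere x0 r y -> u y - phi y < u y0 - phi y0) ->
  exists z, dist z x0 < r /\ u y0 - phi y0 <= u z - phi z /\
            local_max_at U (fun y => u y - phi y) z.
Proof.
  intros HrR Hphi Hy0 Hsphere.
  assert (Hr : 0 <= r) by (generalize (dist_ge0 y0 x0); unfold cball in Hy0; lra).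
  destruct (cball_argmax x0 r (fun y => u y - phi y)) as [z [Hz Hmax]]; auto.
  { apply cont_on_minus; auto. apply (cont_on_subset _ _ _ u_cont).
    intros y Hy. unfold cball in *. lra. }
  assert (Hz0 : u y0 - phi y0 <= u z - phi z) by auto.
  assert (Hzr : dist z x0 < r).
  { destruct (Rle_lt_or_eq_dec _ _ Hz) as [|E]; auto. specialize (Hsphere z E). lra. }
  exists z. repeat split; auto.
  destruct (cont_on_dist (fun _ => True) x0 z I (r - dist z x0)) as [d [Hd Hnear]]; [lra|].
  exists d. split; auto. intros y _ Hy. apply Hmax.
  specialize (Hnear y I Hy). apply Rabs_def2 in Hnear. unfold cball. lra.
Qed.

Lemma center_le_sphere_bound r T :
  (0 < n)%nat -> 0 < r -> r <= R0 -> (forall y, sphere x0 r y -> u y <= T) ->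
  u x0 <= T + M * (r * r).
Proof.
  intros Hn Hr HrR HT. apply Rnot_lt_le. intros Hlt.
  set (p := radial x0 (fun t => T + M * (r * r) - M * t)).
  assert (Hp_sphere : forall y, sphere x0 r y -> p y = T).
  { intros y Hy. unfold p, radial. rewrite <- dist_sq, Hy. ring. }
  assert (Hp_center : p x0 = T + M * (r * r)).
  { unfold p, radial. rewrite sqdist_self. ring. }
  destruct (interior_local_max p r x0) as [z [Hz [_ Hmax]]]; auto.
  - exact (proj1 (paraboloid_C2 x0 (T + M * (r * r)) M (cball x0 r))).
  - now apply cball_center, Rlt_le.
  - intros y Hy. rewrite Hp_sphere, Hp_center by auto. specialize (HT y Hy). lra.
  - assert (- M <= - 2 * M); [|lra].
    apply (inf_lap_plus_ge_at_touching _ _ _ z _ (paraboloid_C2 x0 (T + M * (r * r)) M U)).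
    + unfold cball. lra.
    + exact Hmax.
    + now apply paraboloid_inf_lap_plus.
Qed.

Lemma cone_comparison Rr a :
  0 < Rr -> Rr <= R0 -> 2 * M * Rr <= a ->
  (forall y, sphere x0 Rr y -> u y <= u x0 + a * Rr - M * (Rr * Rr)) ->
  forall y, cball x0 Rr y -> u y <= u x0 + a * dist y x0 - M * (dist y x0 * dist y x0).
Proof.
  intros HR HRR Ha Hsphere y0 Hy0. apply Rnot_lt_le. intros Hlt.
  set (cone := fun y => u x0 + a * dist y x0 - M * (dist y x0 * dist y x0)).
  assert (Hcone : cont_on (cball x0 Rr) cone).
  { unfold cone. apply cont_on_minus; [apply cont_on_plus|apply cont_on_mult];
      try apply cont_on_mult; auto using cont_on_const, cont_on_dist. }
  destruct (interior_local_max cone Rr y0) as [z [Hz [Hz0 Hmax]]]; auto.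
  { intros y Hy. unfold cone. rewrite Hy. specialize (Hsphere y Hy). lra. }
  set (t1 := sqdist x0 z / 2).
  assert (Hzx0 : 0 < dist z x0).
  { destruct (Rle_lt_or_eq_dec _ _ (dist_ge0 z x0)) as [|E]; auto.
    apply eq_sym, dist_eq0 in E. subst z. unfold cone in Hz0. rewrite dist_self in Hz0. lra. }
  assert (Hq : sqdist x0 z = dist z x0 * dist z x0) by apply eq_sym, dist_sq.
  assert (Ht1 : 0 < t1) by (unfold t1; nra).
  assert (Hzt1 : sqdist x0 z = 2 * t1) by (unfold t1; field).
  set (k := radial x0 (fun t => u x0 + a * smooth_sqrt t1 t - M * t)).
  (* The smoothed cone [k] agrees with [cone] where [|y - x0|^2 >= t1], a neighbourhood of [z]. *)
  assert (Hk_local : local_max_at U (fun y => u y - k y) z).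
  { destruct Hmax as [d1 [Hd1 Hmax]].
    destruct (cont_on_sqdist (fun _ => True) x0 z I t1) as [d2 [Hd2 Hnear]]; auto.
    exists (Rmin d1 d2). split; [now apply Rmin_pos|]. intros y Hy Hyd.
    specialize (Hnear y I (Rlt_le_trans _ _ _ Hyd (Rmin_r _ _))). apply Rabs_def2 in Hnear.
    unfold k. rewrite !smoothed_cone_eq by lra.
    apply (Hmax y Hy (Rlt_le_trans _ _ _ Hyd (Rmin_l _ _))). }
  assert (- M <= - 2 * M); [|lra].
  apply (inf_lap_plus_ge_at_touching _ _ _ z _ (smoothed_cone_C2 x0 t1 (u x0) a M Ht1 U)).
  - unfold cball. lra.
  - exact Hk_local.
  - apply smoothed_cone_inf_lap_plus; [auto|lra|nra].
Qed.

Lemma sphere_slope_exists r :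
  (0 < n)%nat -> 0 < r -> r <= R0 -> exists s, sphere_slope u x0 r s.
Proof.
  intros Hn Hr HrR.
  destruct (cball_argmax x0 r u) as [z [_ Hz]]; [lra|..].
  { apply (cont_on_subset _ _ _ u_cont). intros y Hy. unfold cball in *. lra. }
  set (k0 := exist (fun k => (k < n)%nat) 0%nat Hn : idx n).
  destruct (completeness (fun m => exists y, sphere x0 r y /\ m = u y)) as [m Hm].
  - exists (u z). intros m (y & Hy & ->). apply Hz. unfold cball, sphere in *. lra.
  - exists (u (shift x0 k0 r)), (shift x0 k0 r). split; auto. apply sphere_point. lra.
  - exists ((m - u x0) / r). unfold sphere_slope.
    replace (u x0 + (m - u x0) / r * r) with m by (field; lra). exact Hm.
Qed.

Lemma sphere_slope_lower r s :
  (0 < n)%nat -> 0 < r -> r <= R0 -> sphere_slope u x0 r s -> - M * r <= s.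
Proof.
  intros Hn Hr HrR [Hub _].
  assert (H := center_le_sphere_bound r (u x0 + s * r) Hn Hr HrR
                 (fun y Hy => Hub (u y) (ex_intro _ y (conj Hy eq_refl)))).
  apply (Rmult_le_reg_r r); nra.
Qed.

Lemma sphere_slope_upper r s Rr s' :
  0 < r < Rr -> Rr <= R0 -> sphere_slope u x0 r s -> sphere_slope u x0 Rr s' ->
  s <= Rmax (s' + M * Rr) (2 * M * Rr).
Proof.
  intros [Hr HrR] HRR [_ Hlub] [HubR _].
  set (a := Rmax (s' + M * Rr) (2 * M * Rr)).
  assert (Ha1 : s' + M * Rr <= a) by apply Rmax_l.
  assert (Ha2 : 2 * M * Rr <= a) by apply Rmax_r.
  assert (Hcone := cone_comparison Rr a ltac:(lra) HRR Ha2).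
  assert (Hinside : forall y, sphere x0 r y -> u y <= u x0 + a * r).
  { intros y Hy. unfold sphere in Hy. rewrite <- Hy.
    refine (Rle_trans _ _ _ (Hcone _ y _) _).
    - intros w Hw. refine (Rle_trans _ _ _ (HubR (u w) (ex_intro _ w (conj Hw eq_refl))) _). nra.
    - unfold cball. lra.
    - assert (0 <= dist y x0) by apply dist_ge0. nra. }
  assert (H : u x0 + s * r <= u x0 + a * r) by (apply Hlub; now intros m (y & Hy & ->); apply Hinside).
  apply (Rmult_le_reg_r r); lra.
Qed.

End SubsolutionNearCenter.

Lemma subsolution_local_setting {n} (U : Rn n -> Prop) (u v : Rn n -> R) x0 :
  is_open U -> U x0 -> cont_on (closure U) u -> cont_on (closure U) v ->
  exists R0 M, 0 < R0 /\ 0 < M /\ (forall y, cball x0 R0 y -> U y) /\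
    cont_on (cball x0 R0) u /\ (forall y, cball x0 R0 y -> - M <= u y - v y).
Proof.
  intros HU Hx0 Hu Hv.
  destruct (HU x0 Hx0) as [ro [Hro Hball]].
  destruct (Hu x0 (closure_of_mem U x0 Hx0) 1) as [du [Hdu Hnear_u]]; [lra|].
  destruct (Hv x0 (closure_of_mem U x0 Hx0) 1) as [dv [Hdv Hnear_v]]; [lra|].
  set (R0 := Rmin ro (Rmin du dv) / 2).
  assert (HR0 : 0 < R0) by (unfold R0; apply Rdiv_lt_0_compat; [repeat apply Rmin_pos|]; lra).
  assert (HR0_lt : R0 < ro /\ R0 < du /\ R0 < dv).
  { unfold R0. generalize (Rmin_l ro (Rmin du dv)) (Rmin_r ro (Rmin du dv))
      (Rmin_l du dv) (Rmin_r du dv). lra. }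
  assert (HinU : forall y, cball x0 R0 y -> U y)
    by (intros y Hy; apply Hball; unfold cball in Hy; lra).
  exists R0, (Rabs (u x0 - v x0) + 2). repeat split; auto.
  - generalize (Rabs_pos (u x0 - v x0)). lra.
  - apply (cont_on_subset _ _ _ Hu). intros y Hy. now apply closure_of_mem, HinU.
  - intros y Hy. assert (Hy' : closure U y) by now apply closure_of_mem, HinU.
    unfold cball in Hy.
    assert (A := Hnear_u y Hy' ltac:(lra)). assert (B := Hnear_v y Hy' ltac:(lra)).
    apply Rabs_def2 in A, B. generalize (Rabs_triang_inv2 (u x0 - v x0) 0). 
    rewrite Rminus_0_r. intros. generalize (Rle_abs (- (u x0 - v x0))). rewrite Rabs_Ropp. lra.
Qed.

Lemma S_plus_lim_exists_of_sub_cond {n} (U : Rn n -> Prop) (u v : Rn n -> R) (x0 : Rn n) :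
  (0 < n)%nat -> is_open U -> U x0 ->
  cont_on (closure U) u -> cont_on (closure U) v -> sub_cond U u v ->
  S_plus_lim_exists U u x0.
Proof.
  intros Hn HU Hx0 Hu Hv Hsub.
  destruct (subsolution_local_setting U u v x0 HU Hx0 Hu Hv)
    as (R0 & M & HR0 & HM & HinU & Hu0 & Hgap).
  destruct (limit_of_cone_bounds M R0 (sphere_slope u x0)) as [L HL]; auto.
  - intros r Hr. eapply sphere_slope_exists; eauto; lra.
  - intros r s Hr. eapply sphere_slope_lower; eauto; lra.
  - intros r s Rr s' Hr HRr. eapply sphere_slope_upper; eauto.
  - exists L. intros eps He. destruct (HL eps He) as [d [Hd HLd]].
    exists d. split; [lra|]. intros r m Hr Hrd _ [[y [Hy <-]] Hmax].
    apply (HLd r); [lra|]. unfold sphere_slope.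
    replace (u x0 + (u y - u x0) / r * r) with (u y) by (field; lra). split.
    + intros m (w & Hw & ->). now apply Hmax.
    + intros b Hb. apply Hb. now exists y.
Qed.

(* Only the subsolution inequalities and openness of [U] are needed. *)
Theorem mainTheorem10 (n : nat) (U : Rn n -> Prop) (u1 u2 : Rn n -> R) :
  (0 < n)%nat ->
  is_domain U -> is_bounded U -> smooth_boundary U ->
  cont_on (closure U) u1 -> cont_on (closure U) u2 ->
  visc_solution U u1 u2 ->
  forall x0, U x0 -> S_plus_lim_exists U u1 x0 /\ S_plus_lim_exists U u2 x0.
Proof.
  intros Hn [HU _] _ _ Hc1 Hc2 [[_ [_ [Hsub1 Hsub2]]] _] x0 Hx0. split.
  - now apply (S_plus_lim_exists_of_sub_cond U u1 u2).
  - now apply (S_plus_lim_exists_of_sub_cond U u2 u1).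
Qed.
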